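(* Let $B\in\mathbb{R}^{n\times n}$ be symmetric, partitioned into $p\times p$ blocks $B_{st}\in\mathbb{R}^{n_s\times n_t}$. Let $\check B$ be its strictly block lower triangular part ($\check B_{st}=B_{st}$ if $s>t$, $0$ otherwise) and $\hat B$ its strictly block upper triangular part ($\hat B_{st}=B_{st}$ if $s<t$, $0$ otherwise). Then for every $\eta\in\mathbb{C}^n$ with $\|\eta\|=1$, $$-\rho(B)\le\mathrm{Re}(\eta^H\check B\eta)\le\rho(B)\quad\text{and}\quad -\rho(B)\le\mathrm{Re}(\eta^H\hat B\eta)\le\rho(B).$$
   Context: $n_1,\dots,n_p$ are positive integers with $\sum_sn_s=n$. $\rho(B)$ is the spectral radius of $B$, and $\eta^H$ is the conjugate transpose. *)

From HB Require Import structures.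
From mathcomp Require Import all_boot all_order all_algebra.
From mathcomp Require Import complex.
Set Implicit Arguments. Unset Strict Implicit. Unset Printing Implicit Defensive.
Import Order.TTheory GRing.Theory Num.Theory.
Local Open Scope ring_scope.
Local Open Scope complex_scope.

Definition eigvals (R : rcfType) (n : nat) (B : 'M[R]_n) : seq R[i] :=
  sval (closed_field_poly_normal (char_poly (map_mx (fun x : R => x%:C) B))).

Definition spectral_radius (R : rcfType) (n : nat) (B : 'M[R]_n) : R :=
  \big[Num.max/0]_(z <- eigvals B) ComplexField.Normc.normc z.

(* Block index of a row/column index i, for the partition of {0..n-1}
   into consecutive blocks of sizes ns 0, ..., ns (p-1):
   blk i = the number of s with ns 0 + ... + ns s <= i, which (for positive
   sizes) is the 0-based index of the block containing i. *)
Definition blk (p : nat) (ns : 'I_p -> nat) (n : nat) (i : 'I_n) : nat :=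
  #|[set s : 'I_p | (\sum_(t < p | t <= s) ns t <= i)%N]|.

Definition blk_lower (R : rcfType) (p : nat) (ns : 'I_p -> nat) (n : nat)
  (B : 'M[R]_n) : 'M[R]_n :=
  \matrix_(i, j) (if (blk ns j < blk ns i)%N then B i j else 0).

Definition blk_upper (R : rcfType) (p : nat) (ns : 'I_p -> nat) (n : nat)
  (B : 'M[R]_n) : 'M[R]_n :=
  \matrix_(i, j) (if (blk ns i < blk ns j)%N then B i j else 0).

Definition hform (R : rcfType) (n : nat) (M : 'M[R]_n) (eta : 'cV[R[i]]_n) : R[i] :=
  ((map_mx conjc eta)^T *m map_mx (fun x : R => x%:C) M *m eta) 0 0.

Definition cnorm2 (R : rcfType) (n : nat) (eta : 'cV[R[i]]_n) : R :=
  \sum_i ComplexField.Normc.normc (eta i 0) ^+ 2.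

From HB Require Import structures.
From mathcomp Require Import all_boot all_order all_algebra.
From mathcomp Require Import complex.
From mathcomp Require Import ring lra.
Import Order.TTheory GRing.Theory Num.Theory.
Local Open Scope ring_scope.
Local Open Scope complex_scope.
Local Notation Re := (@complex.Re _).

(* For symmetric B the Rayleigh bound |Re eta^H B eta| <= rho(B) |eta|^2
   follows from the unitary spectral decomposition of B seen as a complex
   Hermitian matrix.  Write B = L + U + D with L, U the strictly block lower
   and upper parts and D the block diagonal part.  Symmetry of B gives
   Re eta^H L eta = Re eta^H U eta, while Re eta^H D eta is the sum of the
   Rayleigh forms of B at the block restrictions eta_k of eta, whose squared
   norms add up to |eta|^2, so it is bounded by rho(B) |eta|^2 as well.
   Hence 2 Re eta^H L eta = Re eta^H B eta - Re eta^H D eta lies in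
   [-2 rho(B) |eta|^2, 2 rho(B) |eta|^2]. *)

Section ComplexLemmas.
Context {R : rcfType}.
Local Notation normc := (@ComplexField.Normc.normc R).

Lemma normc_real (x : R) : normc x%:C = `|x|.
Proof. by rewrite /ComplexField.Normc.normc /= expr0n /= addr0 sqrtr_sqr. Qed.

Lemma normc_ge0 (z : R[i]) : 0 <= normc z.
Proof. by case: z => a b; rewrite /ComplexField.Normc.normc sqrtr_ge0. Qed.

Lemma mulJc (z : R[i]) : conjc z * z = (normc z ^+ 2)%:C.
Proof.
case: z => a b; rewrite /ComplexField.Normc.normc sqr_sqrtr ?addr_ge0 ?sqr_ge0 //.
by simpc; congr (_ +i* _); ring.
Qed.

Lemma Re_mul_realC (a b : R[i]) (x : R) : Re (a * x%:C * b) = x * Re (a * b).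
Proof. by case: a => a1 a2; case: b => b1 b2 /=; ring. Qed.

Lemma Re_mulJc_sym (a b : R[i]) : Re (conjc a * b) = Re (conjc b * a).
Proof. by case: a => a1 a2; case: b => b1 b2 /=; ring. Qed.

End ComplexLemmas.

Lemma eigenvalue_spectral_diag (C : numClosedFieldType) (n : nat) (A : 'M[C]_n)
    (k : 'I_n) :
  A \is normalmx -> eigenvalue A (spectral_diag A 0 k).
Proof.
move=> /orthomx_spectralP eA; set P := spectralmx A in eA *.
have Pu : P \is unitarymx := spectral_unitarymx A.
apply/eigenvalueP; exists (row k P).
  rewrite -row_mul [in LHS]eA !mulmxA mulmxV ?spectral_unit // mul1mx.
  by rewrite row_mul row_diag_mx -scalemxAl -rowE.
apply/negP => /eqP Pk0; have := unitarymxP Pu => /(congr1 (row k)).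
rewrite row_mul Pk0 mul0mx => /matrixP/(_ 0 k); rewrite !mxE eqxx /=.
by move/eqP; rewrite eq_sym oner_eq0.
Qed.

Section Rayleigh.
Context {R : rcfType} {n : nat}.
Local Notation normc := (@ComplexField.Normc.normc R).
Local Notation realC := (map_mx (fun x : R => x%:C)).

Lemma eigenvalue_mem_eigvals (B : 'M[R]_n) z :
  eigenvalue (realC B) z -> z \in eigvals B.
Proof.
rewrite eigenvalue_root_char /eigvals; case: closed_field_poly_normal => s /= ->.
by rewrite (monicP (char_poly_monic _)) scale1r root_prod_XsubC.
Qed.

Lemma normc_le_spectral_radius (B : 'M[R]_n) z :
  z \in eigvals B -> normc z <= spectral_radius B.
Proof. by move=> zB; apply: (le_bigmax_seq _ _ xpredT _ zB isT). Qed.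

Lemma symmetric_realC_hermsym {B : 'M[R]_n} : B^T = B -> realC B \is hermsymmx.
Proof.
move=> symB; apply: realsym_hermsym.
  apply/is_hermitianmxP; rewrite expr0 scale1r.
  by apply/matrixP => i j; rewrite !mxE -[in LHS]symB mxE.
by apply/mxOverP => i j; rewrite mxE; apply/complex_realP; exists (B i j).
Qed.

Lemma cnorm2E (v : 'cV[R[i]]_n) : ((map_mx conjc v)^T *m v) 0 0 = (cnorm2 v)%:C.
Proof.
rewrite mxE /cnorm2 rmorph_sum; apply: eq_bigr => i _.
by rewrite !mxE mulJc.
Qed.

Lemma cnorm2_unitary {P : 'M[R[i]]_n} (v : 'cV[R[i]]_n) :
  P \is unitarymx -> cnorm2 (P *m v) = cnorm2 v.
Proof.
move=> Pu; apply: complexI; rewrite -!cnorm2E map_mxM trmx_mul.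
have PhP : (map_mx conjc P)^T *m P = 1%:M.
  by have := mulVmx (unitarymx_unit Pu); rewrite invmx_unitary // map_trmx.
by rewrite mulmxA -(mulmxA _ _ P) PhP mulmx1.
Qed.

Lemma Re_hform_sym_bound (B : 'M[R]_n) (eta : 'cV[R[i]]_n) : B^T = B ->
  - spectral_radius B * cnorm2 eta <= Re (hform B eta)
    <= spectral_radius B * cnorm2 eta.
Proof.
move=> symB; have AH := symmetric_realC_hermsym symB.
have AN := hermitian_normalmx AH.
have /orthomx_spectralP eA := AN.
set P := spectralmx _ in eA; set d := spectral_diag _ in eA.
have Pu : P \is unitarymx := spectral_unitarymx _.
pose r k := Re (d 0 k).
have dr k : d 0 k = (r k)%:C.
  by rewrite /r RRe_real //; apply: (mxOverP (hermitian_spectral_diag_real AH)).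
have rb k : - spectral_radius B <= r k <= spectral_radius B.
  rewrite -ler_norml -normc_real -dr; apply/normc_le_spectral_radius.
  exact/eigenvalue_mem_eigvals/eigenvalue_spectral_diag.
set w := P *m eta.
have hform_w : hform B eta = ((map_mx conjc w)^T *m diag_mx d *m w) 0 0.
  (* the remaining mismatch is [conjC] versus [conjc], which agree on [R[i]] *)
  by rewrite /hform eA invmx_unitary // /w map_mxM trmx_mul !map_trmx !mulmxA.
have Re_hform_w : Re (hform B eta) = \sum_k r k * normc (w k 0) ^+ 2.
  rewrite hform_w mxE raddf_sum; apply: eq_bigr => k _.
  by rewrite mul_mx_diag !mxE dr mulrAC mulJc -rmorphM mulrC.
rewrite Re_hform_w -(cnorm2_unitary eta Pu) /cnorm2 !mulr_sumr.
apply/andP; split; apply: ler_sum => k _;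
  rewrite ler_wpM2r ?exprn_ge0 ?normc_ge0 //; by case/andP: (rb k).
Qed.

End Rayleigh.

Section Blocks.
Context {R : rcfType} {n m : nat} (b : 'I_n -> 'I_m).

Definition lower_part (M : 'M[R]_n) : 'M[R]_n :=
  \matrix_(i, j) (if (b j < b i)%N then M i j else 0).

Definition upper_part (M : 'M[R]_n) : 'M[R]_n :=
  \matrix_(i, j) (if (b i < b j)%N then M i j else 0).

Definition diag_part (M : 'M[R]_n) : 'M[R]_n :=
  \matrix_(i, j) (if b i == b j then M i j else 0).

Definition block_part (k : 'I_m) (eta : 'cV[R[i]]_n) : 'cV[R[i]]_n :=
  \col_i (if b i == k then eta i 0 else 0).

Lemma block_decomposition (M : 'M[R]_n) :
  M = lower_part M + upper_part M + diag_part M.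
Proof.
apply/matrixP => i j; rewrite !mxE -val_eqE.
by case: ltngtP; rewrite ?addr0 ?add0r.
Qed.

Lemma hformE (M : 'M[R]_n) (eta : 'cV[R[i]]_n) :
  hform M eta = \sum_i \sum_j conjc (eta i 0) * (M i j)%:C * eta j 0.
Proof.
rewrite /hform mxE exchange_big; apply: eq_bigr => j _.
by rewrite mxE mulr_suml; apply: eq_bigr => i _; rewrite !mxE.
Qed.

Lemma hformD (M N : 'M[R]_n) (eta : 'cV[R[i]]_n) :
  hform (M + N) eta = hform M eta + hform N eta.
Proof.
rewrite !hformE -big_split; apply: eq_bigr => i _.
by rewrite -big_split; apply: eq_bigr => j _; rewrite mxE rmorphD mulrDr mulrDl.
Qed.

Lemma Re_hformE (M : 'M[R]_n) (eta : 'cV[R[i]]_n) :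
  Re (hform M eta) = \sum_i \sum_j M i j * Re (conjc (eta i 0) * eta j 0).
Proof.
rewrite hformE raddf_sum; apply: eq_bigr => i _.
rewrite raddf_sum; apply: eq_bigr => j _; exact: Re_mul_realC.
Qed.

Lemma Re_hform_lower_upper (B : 'M[R]_n) (eta : 'cV[R[i]]_n) : B^T = B ->
  Re (hform (lower_part B) eta) = Re (hform (upper_part B) eta).
Proof.
move=> symB; rewrite !Re_hformE exchange_big; apply: eq_bigr => i _.
apply: eq_bigr => j _; rewrite !mxE -[in LHS]symB mxE.
by rewrite Re_mulJc_sym.
Qed.

Lemma hform_diag_part (M : 'M[R]_n) (eta : 'cV[R[i]]_n) :
  hform (diag_part M) eta = \sum_k hform M (block_part k eta).
Proof.
under [RHS]eq_bigr do rewrite hformE.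
rewrite hformE [RHS]exchange_big; apply: eq_bigr => i _ /=.
rewrite [RHS]exchange_big; apply: eq_bigr => j _ /=.
rewrite (bigD1 (b i)) //= big1 => [|k nik]; last first.
  by rewrite !mxE (eq_sym (b i)) (negbTE nik) conjc0 !mul0r.
rewrite !mxE eqxx addr0 (eq_sym (b j)).
by case: eqP; rewrite ?mulr0 ?mul0r.
Qed.

Lemma cnorm2_block_part (eta : 'cV[R[i]]_n) :
  \sum_k cnorm2 (block_part k eta) = cnorm2 eta.
Proof.
rewrite /cnorm2 exchange_big; apply: eq_bigr => i _.
rewrite (bigD1 (b i)) //= big1 => [|k nik]; rewrite mxE ?eqxx ?addr0 //.
by rewrite eq_sym (negbTE nik) ComplexField.Normc.normc0 expr0n.
Qed.

Lemma Re_hform_diag_part_bound (B : 'M[R]_n) (eta : 'cV[R[i]]_n) : B^T = B ->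
  - spectral_radius B * cnorm2 eta <= Re (hform (diag_part B) eta)
    <= spectral_radius B * cnorm2 eta.
Proof.
move=> symB; rewrite hform_diag_part raddf_sum -cnorm2_block_part !mulr_sumr.
by apply/andP; split; apply: ler_sum => k _;
  case/andP: (Re_hform_sym_bound B (block_part k eta) symB).
Qed.

Lemma Re_hform_lower_bound (B : 'M[R]_n) (eta : 'cV[R[i]]_n) : B^T = B ->
  - spectral_radius B * cnorm2 eta <= Re (hform (lower_part B) eta)
    <= spectral_radius B * cnorm2 eta.
Proof.
move=> symB.
have Re_hform_split : Re (hform B eta) =
    2 * Re (hform (lower_part B) eta) + Re (hform (diag_part B) eta).
  rewrite {1}(block_decomposition B) !hformD !raddfD /=.
  by rewrite -Re_hform_lower_upper //; ring.
have /andP[lo hi] := Re_hform_sym_bound B eta symB.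
have /andP[dlo dhi] := Re_hform_diag_part_bound B eta symB.
apply/andP; split; lra.
Qed.

End Blocks.

Lemma blk_ltS {p : nat} (ns : 'I_p -> nat) {n : nat} (i : 'I_n) :
  (blk ns i < p.+1)%N.
Proof. by rewrite ltnS /blk (leq_trans (max_card _)) ?card_ord. Qed.

Definition blk_ord {p : nat} (ns : 'I_p -> nat) {n : nat} (i : 'I_n) : 'I_p.+1 :=
  Ordinal (blk_ltS ns i).

Theorem lemma11 (R : rcfType) (p : nat) (ns : 'I_p -> nat) (n : nat)
  (B : 'M[R]_n) :
  (forall s, (0 < ns s)%N) -> (\sum_(s < p) ns s)%N = n ->
  B^T = B ->
  forall eta : 'cV[R[i]]_n, cnorm2 eta = 1 ->
    (- spectral_radius B <= complex.Re (hform (blk_lower ns B) eta) <= spectral_radius B)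
    /\ (- spectral_radius B <= complex.Re (hform (blk_upper ns B) eta) <= spectral_radius B).
Proof.
(* The bound holds for any labelling of the indices by block numbers. *)
move=> _ _ symB eta eta1.
have -> : blk_lower ns B = lower_part (blk_ord ns) B by [].
have -> : blk_upper ns B = upper_part (blk_ord ns) B by [].
rewrite -Re_hform_lower_upper //.
by have := Re_hform_lower_bound (blk_ord ns) B eta symB; rewrite eta1 !mulr1.
Qed.
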